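(* Let $r,u\in\mathbb{R}^p$, $\eta\in\mathbb{R}$, $H$ symmetric positive semidefinite, $q\ge0$, $K:=H+2qI_p\succ0$, and $\pi\in[0,1]$. For a vector $g\in\mathbb{R}^p$ let $\mathcal{M}[g]:=\max_{z:\,u^\top z\le0}\big(g^\top z-\tfrac12 z^\top Kz\big)$. Let $\mathcal{M}:=\mathcal{M}[r]$ and $\tilde{\mathcal{M}}(\pi):=\mathcal{M}[(1-\pi)r+\pi\eta u]$. Then $$\tilde{\mathcal{M}}(\pi)\le(1-\pi)^2\,\mathcal{M}+\frac{\pi(1-\pi)}{2}\,\eta^2\,\frac{\|u\|_2^2}{\lambda_{\min}(K)}.$$ In particular $\tilde{\mathcal{M}}$ decreases monotonically in $\pi$, and, for any $U^{\mathrm{hon}}>0$, the Price-of-Gaming upper bound $\sqrt{2(u^\top K^{-1}u)\,\tilde{\mathcal{M}}(\pi)}\,/\,U^{\mathrm{hon}}$ also decreases monotonically as $\pi$ increases.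
   Context: Setting: rewards depend on the mixed signal $\tilde s=(1-\pi)s+\pi c$, where $s$ is the observed signal (with reward gradient $r$ with respect to the manipulation $z$) and $c$ is a private-holdout challenge score with $\mathbb{E}[c\mid z]=\eta\,u^\top z$; hence the effective reward gradient is $(1-\pi)r+\pi\eta u$. $u$ is the welfare gradient, $H$ audit curvature, $q$ isotropic damping, and $\mathcal{M}[\cdot]$ is the Manipulability Index (maximal reward gain over manipulations that do not increase first-order welfare loss).
   Formalization: The challenge sensitivity η in $\mathbb{E}[c\mid z]=\eta\,u^\top z$ is restricted to η ≥ 0 rather than ranging over all of ℝ. The statement above fails without it. *)

From mathcomp Require Import all_boot all_order all_algebra.
From mathcomp Require Import classical_sets reals.
Set Implicit Arguments. Unset Strict Implicit. Unset Printing Implicit Defensive.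
Import Order.TTheory GRing.Theory Num.Theory.
Local Open Scope ring_scope.
Local Open Scope classical_set_scope.

Section Defs.
Variables (R : realType) (p : nat).

Definition dotv (g z : 'cV[R]_p) : R := (g^T *m z) 0 0.

Definition qform (A : 'M[R]_p) (z : 'cV[R]_p) : R := (z^T *m A *m z) 0 0.

Definition sym_mx (A : 'M[R]_p) : Prop := A^T = A.

Definition psd (A : 'M[R]_p) : Prop :=
  sym_mx A /\ forall z : 'cV[R]_p, 0 <= qform A z.

Definition posdef (A : 'M[R]_p) : Prop :=
  sym_mx A /\ forall z : 'cV[R]_p, z != 0 -> 0 < qform A z.

Definition lambda_min (A : 'M[R]_p) : R := inf [set a : R | eigenvalue A a].

(* Manipulability Index  M[g] = max_{z : u^T z <= 0} (g^T z - 1/2 z^T K z),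
   written as the supremum of the attained values (the max exists for K > 0). *)
Definition manip (K : 'M[R]_p) (u g : 'cV[R]_p) : R :=
  sup [set v : R | exists z : 'cV[R]_p,
         dotv u z <= 0 /\ v = dotv g z - 2^-1 * qform K z].

Definition manip_mix (K : 'M[R]_p) (u r : 'cV[R]_p) (eta pi : R) : R :=
  manip K u ((1 - pi) *: r + (pi * eta) *: u).

Definition pog_bound (K : 'M[R]_p) (u r : 'cV[R]_p) (eta pi Uhon : R) : R :=
  Num.sqrt (2 * qform (invmx K) u * manip_mix K u r eta pi) / Uhon.

End Defs.

From mathcomp Require Import all_boot all_order all_algebra.
From mathcomp Require Import boolp classical_sets reals ring lra.
Set Implicit Arguments. Unset Strict Implicit. Unset Printing Implicit Defensive.
Import Order.TTheory GRing.Theory Num.Theory.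
Local Open Scope ring_scope.
Local Open Scope classical_set_scope.

(* Everything follows from the homogeneity of the index in its gradient:
   M[t g + c u] <= t^2 M[g] for t, c >= 0.  On the feasible cone u^T z <= 0
   the extra term c u^T z is nonpositive, and the substitution z = t w scales
   the objective of t g to t^2 times that of g.  With c = pi eta this gives
   M~(pi) <= (1 - pi)^2 M, sharper than the claimed bound, whose extra term is
   nonnegative.  For pi1 <= pi2 < 1 the gradient at pi2 is t (gradient at pi1)
   + c u with t = (1 - pi2)/(1 - pi1) <= 1 and c >= 0, so M~, and with it the
   Price-of-Gaming bound, decreases. *)

Section QuadraticForms.
Variables (R : realType) (p : nat).
Implicit Types (g u z : 'cV[R]_p) (K : 'M[R]_p).

Lemma dotvDl (a b : R) g1 g2 z :
  dotv (a *: g1 + b *: g2) z = a * dotv g1 z + b * dotv g2 z.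
Proof. by rewrite /dotv linearD !linearZ /= mulmxDl -!scalemxAl !mxE. Qed.

Lemma dotvZr (a : R) g z : dotv g (a *: z) = a * dotv g z.
Proof. by rewrite /dotv -scalemxAr mxE. Qed.

Lemma dotv0 g : dotv g 0 = 0.
Proof. by rewrite /dotv mulmx0 mxE. Qed.

Lemma dotvv_ge0 g : 0 <= dotv g g.
Proof. by rewrite /dotv mxE; apply: sumr_ge0 => i _; rewrite mxE -expr2 sqr_ge0. Qed.

Lemma qformZ (a : R) K z : qform K (a *: z) = a ^+ 2 * qform K z.
Proof. by rewrite /qform !linearZ /= -!scalemxAl !mxE mulrA expr2. Qed.

Lemma qform0 K : qform K 0 = 0.
Proof. by rewrite /qform mulmx0 mxE. Qed.

Lemma posdef_qform_ge0 K z : posdef K -> 0 <= qform K z.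
Proof.
case=> _ hK; have [->|nz] := eqVneq z 0; first by rewrite qform0.
exact/ltW/hK.
Qed.

Lemma posdef_unitmx K : posdef K -> K \in unitmx.
Proof.
case=> _ hK; rewrite -row_free_unit -kermx_eq0.
apply/rowV0P => v /sub_kermxP vK; apply/eqP/negPn/negP => nz.
have vT_neq0 : v^T != 0 by rewrite trmx_eq0.
by have := hK _ vT_neq0; rewrite /qform trmxK vK mul0mx mxE ltxx.
Qed.

Lemma posdef_eigenvalue_gt0 K a : posdef K -> eigenvalue K a -> 0 < a.
Proof.
case=> _ hK /eigenvalueP [v vK nz].
have vT_neq0 : v^T != 0 by rewrite trmx_eq0.
have := hK _ vT_neq0.
have vv_ge0 := dotvv_ge0 v^T; rewrite /dotv trmxK in vv_ge0.
rewrite /qform trmxK vK -scalemxAl mxE ltNge => /negP qK_gt0.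
by rewrite ltNge; apply/negP => a_le0; apply: qK_gt0; rewrite mulr_le0_ge0.
Qed.

Lemma lambda_min_ge0 K : posdef K -> 0 <= lambda_min K.
Proof.
move=> hK; rewrite /lambda_min.
(* Without eigenvalues (e.g. p = 0) the infimum is the junk value [inf set0 = 0]. *)
have [[a ea]|none] := pselect (exists a, eigenvalue K a); last first.
  suff -> : [set a : R | eigenvalue K a] = set0 by rewrite inf0.
  by apply/seteqP; split => // a /= ea; apply: none; exists a.
apply: lb_le_inf; first by exists a.
by move=> b /(posdef_eigenvalue_gt0 hK)/ltW.
Qed.

End QuadraticForms.

Section Manipulability.
Variables (R : realType) (p : nat) (K : 'M[R]_p) (u : 'cV[R]_p).
Hypothesis posdefK : posdef K.
Implicit Types (g z : 'cV[R]_p).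

Definition manip_values g := [set v : R | exists z : 'cV[R]_p,
  dotv u z <= 0 /\ v = dotv g z - 2^-1 * qform K z].

Lemma manip_values0 g : manip_values g 0.
Proof. by exists 0; rewrite !dotv0 qform0 mulr0 subr0. Qed.

Lemma qform_sub_solution g z :
  qform K (invmx K *m g - z)
  = qform K (invmx K *m g) - 2 * dotv g z + qform K z.
Proof.
have unitK := posdef_unitmx posdefK; have [symK _] := posdefK.
have sKz : (invmx K *m g)^T *m K *m z = g^T *m z.
  by rewrite trmx_mul trmx_inv symK -!mulmxA (mulmxA (invmx K)) mulVmx // mul1mx.
have zKs : z^T *m K *m (invmx K *m g) = (g^T *m z)^T.
  by rewrite -mulmxA (mulmxA K) mulmxV // mul1mx trmx_mul trmxK.
rewrite /qform /dotv mulmxBr [(_ - z)^T]linearB /= !mulmxBl sKz zKs.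
move: ((invmx K *m g)^T *m K *m (invmx K *m g)) (z^T *m K *m z) (g^T *m z).
by move=> S Z G; rewrite !mxE; lra.
Qed.

(* Completing the square around the unconstrained maximizer [invmx K *m g]. *)
Lemma manip_objective_le g z :
  dotv g z - 2^-1 * qform K z <= 2^-1 * qform K (invmx K *m g).
Proof.
by have := posdef_qform_ge0 (invmx K *m g - z) posdefK; rewrite qform_sub_solution; lra.
Qed.

Lemma has_sup_manip_values g : has_sup (manip_values g).
Proof.
split; first by exists 0; apply: manip_values0.
by exists (2^-1 * qform K (invmx K *m g)) => v [z [_ ->]]; apply: manip_objective_le.
Qed.

Lemma manip_ub g z : dotv u z <= 0 ->
  dotv g z - 2^-1 * qform K z <= manip K u g.
Proof. by move=> uz; apply: (sup_upper_bound (has_sup_manip_values g)); exists z. Qed.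

Lemma manip_ge0 g : 0 <= manip K u g.
Proof. exact: (sup_upper_bound (has_sup_manip_values g)) (manip_values0 g). Qed.

Lemma manip_scale_shift g (t c : R) : 0 <= t -> 0 <= c ->
  manip K u (t *: g + c *: u) <= t ^+ 2 * manip K u g.
Proof.
move=> t_ge0 c_ge0; apply: ge_sup; first by exists 0; apply: manip_values0.
move=> _ [z [uz ->]]; rewrite dotvDl.
have Kz_ge0 := posdef_qform_ge0 z posdefK.
have cuz_le0 : c * dotv u z <= 0 by rewrite mulr_ge0_le0.
have [->|t_neq0] := eqVneq t 0; first by rewrite expr0n /= mul0r; lra.
have t_gt0 : 0 < t by rewrite lt_def t_neq0.
set w := t^-1 *: z.
have zw : z = t *: w by rewrite scalerA mulfV // scale1r.
have uw : dotv u w <= 0 by rewrite dotvZr mulr_ge0_le0 // invr_ge0 ltW.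
clearbody w.
have := ler_wpM2l (sqr_ge0 t) (manip_ub g uw).
by rewrite [in dotv g z]zw [in qform K z]zw dotvZr qformZ; lra.
Qed.

End Manipulability.

Lemma mix_rescale (F : fieldType) (V : lmodType F) (r u : V) (eta a b : F) :
  a != 1 ->
  (1 - b) *: r + (b * eta) *: u
  = ((1 - b) / (1 - a)) *: ((1 - a) *: r + (a * eta) *: u)
    + (eta * (b - a) / (1 - a)) *: u.
Proof.
move=> a_neq1; have a1_neq0 : 1 - a != 0 by rewrite subr_eq0 eq_sym.
rewrite scalerDr !scalerA -addrA -scalerDl divfK //.
by congr (_ + _ *: u); field.
Qed.

Lemma ler_sqrt_mull (R : rcfType) (a x y : R) : 0 <= y -> y <= x ->
  Num.sqrt (a * y) <= Num.sqrt (a * x).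
Proof.
move=> y_ge0 le_yx; have [a_ge0|a_lt0] := leP 0 a.
  by rewrite ler_wsqrtr // ler_wpM2l.
suff -> : Num.sqrt (a * y) = 0 by rewrite sqrtr_ge0.
by rewrite ler0_sqrtr // nmulr_rle0.
Qed.

Section Mixing.
Variables (R : realType) (p : nat) (K : 'M[R]_p) (u r : 'cV[R]_p) (eta : R).
Hypotheses (posdefK : posdef K) (eta_ge0 : 0 <= eta).

Lemma manip_mix_le pi : 0 <= pi <= 1 ->
  manip_mix K u r eta pi <= (1 - pi) ^+ 2 * manip K u r.
Proof.
case/andP=> pi_ge0 pi_le1.
by apply: manip_scale_shift; rewrite ?subr_ge0 ?mulr_ge0.
Qed.

Lemma manip_mix_antitone pi1 pi2 : pi1 <= pi2 -> pi2 <= 1 ->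
  manip_mix K u r eta pi2 <= manip_mix K u r eta pi1.
Proof.
move=> le12 pi2_le1; have [pi1_eq1|pi1_neq1] := eqVneq pi1 1.
  by have -> : pi2 = pi1 by apply/le_anti; rewrite le12 pi1_eq1 pi2_le1.
have pi1_lt1 : pi1 < 1 by rewrite lt_neqAle pi1_neq1 (le_trans le12 pi2_le1).
have pi1_gap_gt0 : 0 < 1 - pi1 by rewrite subr_gt0.
have t_ge0 : 0 <= (1 - pi2) / (1 - pi1) by rewrite divr_ge0 ?subr_ge0 ?(ltW pi1_lt1).
have t_le1 : (1 - pi2) / (1 - pi1) <= 1 by rewrite ler_pdivrMr // mul1r lerB.
have c_ge0 : 0 <= eta * (pi2 - pi1) / (1 - pi1).
  by rewrite divr_ge0 ?mulr_ge0 ?subr_ge0 ?(ltW pi1_lt1).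
rewrite /manip_mix (mix_rescale r u eta pi2 pi1_neq1).
apply: le_trans (manip_scale_shift u posdefK _ t_ge0 c_ge0) _.
by rewrite -[X in _ <= X]mul1r ler_wpM2r ?manip_ge0 // expr_le1.
Qed.

Lemma pog_bound_antitone (Uhon : R) pi1 pi2 : 0 < Uhon ->
  pi1 <= pi2 -> pi2 <= 1 ->
  pog_bound K u r eta pi2 Uhon <= pog_bound K u r eta pi1 Uhon.
Proof.
move=> Uhon_gt0 le12 pi2_le1; apply: ler_wpM2r; first by rewrite invr_ge0 ltW.
exact: ler_sqrt_mull (manip_ge0 u posdefK _) (manip_mix_antitone le12 pi2_le1).
Qed.

End Mixing.

Theorem theorem8 (R : realType) (p : nat) (r u : 'cV[R]_p) (eta q : R)
    (H : 'M[R]_p) :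
  psd H -> 0 <= q -> posdef (H + (2 * q)%:M) ->
  0 <= eta ->
  let K := H + (2 * q)%:M in
  (forall pi : R, 0 <= pi <= 1 ->
     manip_mix K u r eta pi
       <= (1 - pi) ^+ 2 * manip K u r
          + pi * (1 - pi) / 2 * eta ^+ 2 * (dotv u u / lambda_min K))
  /\ (forall pi1 pi2 : R, 0 <= pi1 -> pi1 <= pi2 -> pi2 <= 1 ->
        manip_mix K u r eta pi2 <= manip_mix K u r eta pi1)
  /\ (forall Uhon : R, 0 < Uhon ->
      forall pi1 pi2 : R, 0 <= pi1 -> pi1 <= pi2 -> pi2 <= 1 ->
        pog_bound K u r eta pi2 Uhon <= pog_bound K u r eta pi1 Uhon).
Proof.
move=> _ _ posdefK eta_ge0 K; split; [|split].
- move=> pi pi01; apply: le_trans (manip_mix_le u r posdefK eta_ge0 pi01) _.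
  have /andP [pi_ge0 pi_le1] := pi01.
  by rewrite lerDl !mulr_ge0 ?invr_ge0 ?subr_ge0 ?sqr_ge0 ?dotvv_ge0 ?lambda_min_ge0.
- by move=> pi1 pi2 _; apply: manip_mix_antitone.
- by move=> Uhon Uhon_gt0 pi1 pi2 _; apply: pog_bound_antitone.
Qed.
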